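(* Let $b_1,\dots,b_k$ be positive integers and $n_1,\dots,n_k$ integers with $\sum_in_ib_i=0$, and let $\alpha^{\mathfrak a}=\prod_{i=1}^k\big(c^{\mathfrak a}_1\cdots c^{\mathfrak a}_{b_i}\big)^{n_i}$. Then for every odd $m\ge3$, $$\frac{\delta_m\alpha^{\mathfrak a}}{\alpha^{\mathfrak a}}=-\frac{T^m}{m}\sum_{i=1}^kn_ib_i^m.$$
   Context: $\mathcal M^{(1)}=\mathbb Q[\zeta^{\mathfrak a}(3),\zeta^{\mathfrak a}(5),\dots]$ is the free polynomial subalgebra of depth-one motivic MZVs in $\mathcal A=\mathcal H/\zeta^{\mathfrak m}(2)\mathcal H$; $\zeta^{\mathfrak a}(k)=0$ for even $k$. For odd $m\ge3$, $\delta_m$ is the continuous $\mathbb Q((T))$-linear derivation $\partial/\partial\zeta^{\mathfrak a}(m)$ of $\mathcal M^{(1)}((T))$. $H^{\mathfrak a}(n)=(-1)^n\sum_{j\ge1}\binom{n+j-1}{n-1}\zeta^{\mathfrak a}(n+j)T^j$; $H^{\mathfrak a}(1^0)=1$, $H^{\mathfrak a}(1^n)=\frac1n\sum_{i=1}^n(-1)^{i-1}H^{\mathfrak a}(i)H^{\mathfrak a}(1^{n-i})$; $c_n^{\mathfrak a}=n\sum_{j\ge0}(n-1)^jT^jH^{\mathfrak a}(1^j)$ for $n\ge1$ (invertible in $\mathcal M^{(1)}[[T]]$). *)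

From HB Require Import structures.
From mathcomp Require Import all_boot all_order all_algebra.
Set Implicit Arguments. Unset Strict Implicit. Unset Printing Implicit Defensive.
Import Order.TTheory GRing.Theory Num.Theory.
Local Open Scope ring_scope.

(* MP K = Q[z_0, ..., z_{K-1}], built as iterated univariate polynomial rings;
   z_j stands for zeta^a(2j+3).  MP K is the image of M^(1) under the
   ring morphism sending zeta^a(2j+3) to z_j for j < K and to 0 for j >= K. *)
Fixpoint MP (K : nat) : idomainType :=
  match K with
  | 0 => rat
  | K'.+1 => ({poly (MP K')} : idomainType)
  end.

Fixpoint zvar (K j : nat) : MP K :=
  match K return MP K with
  | 0 => 0
  | K'.+1 => if j == K' then 'X else (zvar K' j)%:P
  end.

Fixpoint pdz (K j : nat) : MP K -> MP K :=
  match K return MP K -> MP K with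
  | 0 => fun _ => 0
  | K'.+1 => fun p => if j == K' then deriv p else map_poly (@pdz K' j) p
  end.

Definition zeta (K k : nat) : MP K :=
  if odd k && (3 <= k)%N then zvar K (k - 3)./2 else 0.

Definition ps (R : Type) := nat -> R.

Section PS.
Variable R : unitRingType.
Definition ps1 : ps R := fun n => (n == 0)%:R.
Definition psmul (f g : ps R) : ps R :=
  fun n => \sum_(i < n.+1) f i * g (n - i)%N.
Fixpoint psinv_list (f : ps R) (n : nat) : seq R :=
  match n with
  | 0 => [:: (f 0%N)^-1]
  | n'.+1 => let s := psinv_list f n' in
      rcons s (- (f 0%N)^-1 * \sum_(1 <= i < n'.+2) f i * nth 0 s (n'.+1 - i))
  end.
Definition psinv (f : ps R) : ps R := fun n => nth 0 (psinv_list f n) n.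
Definition psexpz (f : ps R) (z : int) : ps R :=
  match z with
  | Posz n => iter n (psmul f) ps1
  | Negz n => psinv (iter n.+1 (psmul f) ps1)
  end.
Definition psprod (s : seq (ps R)) : ps R := foldr psmul ps1 s.
End PS.

(* delta_m acting coefficientwise; zeta^a(m) corresponds to z_{(m-3)/2} *)
Definition delta (K m : nat) (f : ps (MP K)) : ps (MP K) :=
  fun n => @pdz K ((m - 3)./2) (f n).

Definition Hs (K n : nat) : ps (MP K) :=
  fun j => if j == 0%N then 0
           else (-1) ^+ n * ('C(n + j - 1, n - 1))%:R * zeta K (n + j).

Fixpoint H1list (K n : nat) : seq (ps (MP K)) :=
  match n with
  | 0 => [:: ps1 (MP K)]
  | n'.+1 => let s := H1list K n' in
      rcons s (fun t => (n'.+1%:R)^-1 *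
        \sum_(1 <= i < n'.+2)
            (-1) ^+ (i - 1) * psmul (Hs K i) (nth (ps1 (MP K)) s (n'.+1 - i)) t)
  end.
Definition H1 (K n : nat) : ps (MP K) := nth (ps1 (MP K)) (H1list K n) n.

Definition cser (K n : nat) : ps (MP K) :=
  fun t => n%:R * \sum_(j < t.+1) (n.-1)%:R ^+ j * H1 K j (t - j)%N.

Definition cprod (K b : nat) : ps (MP K) :=
  psprod [seq cser K j.+1 | j <- iota 0 b].

Definition alpha (K k : nat) (b : 'I_k -> nat) (n : 'I_k -> int) : ps (MP K) :=
  psprod [seq psexpz (cprod K (b i)) (n i) | i <- enum 'I_k].

(* delta_m is a derivation, so alpha |-> delta_m(alpha)/alpha turns products and
   integer powers of units into sums and multiples, and everything reduces to
   delta_m(c_n)/c_n.  The series E_j = H(1^j) are obtained from the H(i) by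
   Newton's identities j E_j = sum_i (-1)^(i-1) H(i) E_(j-i), and
   delta_m H(i) = (-1)^i binom(m-1,i-1) T^(m-i) for 0 < i < m (and 0 for i >= m);
   by induction delta_m E_j = - sum_(0<l<m) binom(m,l)/m T^(m-l) E_(j-l).
   Substituting into c_n = n sum_j E_j ((n-1)T)^j and using the binomial theorem
   gives delta_m(c_n)/c_n = -(n^m - 1 - (n-1)^m)/m T^m.  This telescopes to
   -(b^m - b)/m T^m for c_1 ... c_b, and the linear terms cancel in alpha because
   sum_i n_i b_i = 0.
   Power series are coefficient sequences; they form a commutative unit ring
   whose units are the series with invertible constant term. *)

From HB Require Import structures.
From mathcomp Require Import all_boot all_order all_algebra.
From mathcomp Require Import boolp.
From mathcomp Require Import zify ring.
Import Order.TTheory GRing.Theory Num.Theory.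
Set Implicit Arguments. Unset Strict Implicit. Unset Printing Implicit Defensive.
Local Open Scope ring_scope.

Section LogarithmicDerivative.
Variables (R : comUnitRingType) (D : {additive R -> R}).
Hypothesis DM : forall x y, D (x * y) = D x * y + x * D y.

Lemma derivation1 : D 1 = 0.
Proof. by have := DM 1 1; rewrite !mul1r mulr1 -{1}[D 1]addr0 => /addrI <-. Qed.

Lemma derivation_nat n : D n%:R = 0.
Proof. by rewrite raddfMn derivation1 mul0rn. Qed.

Lemma derivationMl x y : D x = 0 -> D (x * y) = x * D y.
Proof. by move=> Dx; rewrite DM Dx mul0r add0r. Qed.

Lemma derivationX_eq0 x n : D x = 0 -> D (x ^+ n) = 0.
Proof.
by move=> Dx; elim: n => [|n IHn]; rewrite ?derivation1 // exprS derivationMl // IHn mulr0.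
Qed.

Definition logder x := D x / x.

Lemma logder1 : logder 1 = 0.
Proof. by rewrite /logder derivation1 mul0r. Qed.

Lemma logderM x y : x \is a GRing.unit -> y \is a GRing.unit ->
  logder (x * y) = logder x + logder y.
Proof.
move=> Ux Uy; rewrite /logder DM invrM // mulrDl; congr (_ + _).
  by rewrite mulrA mulrK.
by rewrite [y^-1 * _]mulrC mulrA (mulrC x) mulrK.
Qed.

Lemma logderV x : x \is a GRing.unit -> logder x^-1 = - logder x.
Proof.
move=> Ux; have := DM x x^-1; rewrite mulrV // derivation1 => /esym/eqP.
rewrite addr_eq0 /logder invrK => /eqP DxV.
by rewrite mulrC DxV opprK.
Qed.

Lemma logderXn x n : x \is a GRing.unit -> logder (x ^+ n) = n%:R * logder x.
Proof.
move=> Ux; elim: n => [|n IHn]; first by rewrite expr0 logder1 mul0r.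
by rewrite exprS logderM ?unitrX // IHn mulrS mulrDl mul1r.
Qed.

Lemma logderXz x (z : int) : x \is a GRing.unit -> logder (x ^ z) = z%:~R * logder x.
Proof.
move=> Ux; case: z => n; first exact: logderXn.
by rewrite logderV ?unitrX // logderXn // NegzE mulrNz mulNr.
Qed.

Lemma logder_prod I (r : seq I) (P : pred I) (F : I -> R) :
    (forall i, P i -> F i \is a GRing.unit) ->
  logder (\prod_(i <- r | P i) F i) = \sum_(i <- r | P i) logder (F i).
Proof.
move=> UF; elim: r => [|i r IHr]; first by rewrite !big_nil logder1.
rewrite !big_cons; case: ifP => // Pi.
by rewrite logderM ?UF ?unitr_prod // IHr.
Qed.

End LogarithmicDerivative.

Section PowerSeriesRing.
Variable R : comUnitRingType.
Implicit Types f g h : ps R.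

(* Equality of series is not decidable: the choice structure required by the
   algebraic hierarchy is the classical one of boolp. *)
HB.instance Definition _ := Choice.copy (ps R) (nat -> R).

Definition ps0 : ps R := fun=> 0.
Definition psadd f g : ps R := fun n => f n + g n.
Definition psopp f : ps R := fun n => - f n.

Fact psaddA : associative psadd.
Proof. by move=> f g h; apply/funext => n; rewrite /psadd addrA. Qed.
Fact psaddC : commutative psadd.
Proof. by move=> f g; apply/funext => n; rewrite /psadd addrC. Qed.
Fact psadd0 : left_id ps0 psadd.
Proof. by move=> f; apply/funext => n; rewrite /psadd add0r. Qed.
Fact psaddN : left_inverse ps0 psopp psadd.
Proof. by move=> f; apply/funext => n; rewrite /psadd addNr. Qed.

HB.instance Definition _ := GRing.isZmodule.Build (ps R) psaddA psaddC psadd0 psaddN.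

(* The coefficients of a product up to n only depend on the truncations at n,
   which transfers the ring laws from polynomials. *)
Lemma psmul_coefM f g (P Q : {poly R}) n :
    (forall i, (i <= n)%N -> P`_i = f i) -> (forall i, (i <= n)%N -> Q`_i = g i) ->
  psmul f g n = (P * Q)`_n.
Proof.
move=> eP eQ; rewrite coefM; apply: eq_bigr => -[i /= lt_in] _.
by rewrite eP ?eQ ?leq_subr // -ltnS.
Qed.

Definition trunc n f : {poly R} := \poly_(i < n.+1) f i.

Lemma coef_trunc n f i : (i <= n)%N -> (trunc n f)`_i = f i.
Proof. by move=> h; rewrite coef_poly ltnS h. Qed.

Lemma coef_truncM f g n i : (i <= n)%N -> (trunc n f * trunc n g)`_i = psmul f g i.
Proof.
move=> le_in; symmetry; apply: psmul_coefM => j le_ji;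
  exact/coef_trunc/(leq_trans le_ji).
Qed.

Fact psmulA : associative (@psmul R).
Proof.
move=> f g h; apply/funext => n.
rewrite (@psmul_coefM _ _ (trunc n f) (trunc n g * trunc n h)); last 2 first.
- exact: coef_trunc.
- exact: coef_truncM.
rewrite mulrA; apply/esym/psmul_coefM; [exact: coef_truncM | exact: coef_trunc].
Qed.

Fact psmulC : commutative (@psmul R).
Proof.
move=> f g; apply/funext => n.
rewrite (@psmul_coefM _ _ (trunc n f) (trunc n g) n); [|exact: coef_trunc..].
by rewrite mulrC; apply/esym/psmul_coefM; exact: coef_trunc.
Qed.

Fact psmul1 : left_id (ps1 R) (@psmul R).
Proof.
move=> f; apply/funext => n.
rewrite (@psmul_coefM _ _ 1 (trunc n f) n) ?mul1r ?coef_trunc //.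
  by move=> i _; rewrite coef1.
exact: coef_trunc.
Qed.

Fact psmulDl : left_distributive (@psmul R) psadd.
Proof.
move=> f g h; apply/funext => n.
by rewrite /psmul /psadd -big_split; apply: eq_bigr => i _; rewrite mulrDl.
Qed.

Fact ps1_neq0 : ps1 R != 0.
Proof. by apply/eqP => /(congr1 (fun f : ps R => f 0%N)) /eqP; rewrite oner_eq0. Qed.

HB.instance Definition _ :=
  GRing.Zmodule_isComNzRing.Build (ps R) psmulA psmulC psmul1 psmulDl ps1_neq0.

Lemma psmulE f g : psmul f g = f * g. Proof. by []. Qed.
Lemma ps1E : ps1 R = 1. Proof. by []. Qed.

Definition psunit : {pred ps R} := fun f => f 0%N \is a GRing.unit.
(* The unit-ring interface requires x^-1 = x off the units, where psinv is junk. *)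
Definition psinvr f := if f \in psunit then psinv f else f.

Lemma size_psinv_list f n : size (psinv_list f n) = n.+1.
Proof. by elim: n => [|n IH] //=; rewrite size_rcons IH. Qed.

Lemma nth_psinv_list f n i : (i <= n)%N -> nth 0 (psinv_list f n) i = psinv f i.
Proof.
elim: n => [|n IH] in i *; first by case: i.
rewrite leq_eqVlt => /predU1P[->|lt_in]; last first.
  by rewrite /= nth_rcons size_psinv_list lt_in IH.
by rewrite /psinv /= !nth_rcons size_psinv_list ltnn eqxx.
Qed.

Lemma psinvS f n : psinv f n.+1 =
  - (f 0%N)^-1 * \sum_(1 <= i < n.+2) f i * psinv f (n.+1 - i)%N.
Proof.
rewrite {1}/psinv /= nth_rcons size_psinv_list ltnn eqxx; congr (_ * _).
by apply: eq_big_nat => i /andP[i_gt0 _]; rewrite nth_psinv_list //; lia.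
Qed.

Lemma psmulV f : f \in psunit -> f * psinv f = 1.
Proof.
move=> Uf; apply/funext => -[|n]; rewrite -psmulE /psmul.
  by rewrite big_ord1 /psinv /= mulrV.
rewrite big_ord_recl subn0 psinvS big_add1 /= big_mkord.
by rewrite mulrA mulrN mulrV // mulN1r addNr.
Qed.

Fact psmulVr : {in psunit, left_inverse 1 psinvr *%R}.
Proof. by move=> f Uf; rewrite /psinvr Uf mulrC psmulV. Qed.

Fact psunitPl f g : g * f = 1 -> f \in psunit.
Proof.
move/(congr1 (fun h : ps R => h 0%N)); rewrite -psmulE /psmul big_ord1 => gf1.
by apply/unitrPr; exists (g 0%N); rewrite mulrC.
Qed.

Fact psinvr_out : {in [predC psunit], psinvr =1 id}.
Proof. by move=> f /negbTE Nf; rewrite /psinvr Nf. Qed.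

HB.instance Definition _ :=
  GRing.ComNzRing_hasMulInverse.Build (ps R) psmulVr psunitPl psinvr_out.

Lemma psunitE f : (f \is a GRing.unit) = (f 0%N \is a GRing.unit).
Proof. by []. Qed.

Lemma psinvE f : f \is a GRing.unit -> psinv f = f^-1.
Proof. by move=> Uf; rewrite -[RHS]mulr1 -(psmulV Uf) mulrA mulVr ?mul1r. Qed.

Lemma coef_psD f g n : (f + g) n = f n + g n. Proof. by []. Qed.
Lemma coef_psN f n : (- f) n = - f n. Proof. by []. Qed.

Lemma coef_ps_sum I (r : seq I) (P : pred I) (F : I -> ps R) n :
  (\sum_(i <- r | P i) F i) n = \sum_(i <- r | P i) F i n.
Proof. exact: (big_morph (fun f : ps R => f n)). Qed.

Lemma coef_psM_eq f g1 g2 n : (forall i, (i <= n)%N -> g1 i = g2 i) ->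
  (f * g1) n = (f * g2) n.
Proof.
move=> eg; rewrite -!psmulE /psmul; apply: eq_bigr => i _.
by rewrite eg ?leq_subr.
Qed.

Definition psC (c : R) : ps R := fun n => if n == 0%N then c else 0.

Fact psC_is_zmod_morphism : zmod_morphism psC.
Proof.
by move=> a b; apply/funext => n; rewrite coef_psD coef_psN /psC; case: eqP; rewrite ?subr0.
Qed.

Fact psC_is_monoid_morphism : monoid_morphism psC.
Proof.
split=> [|a b]; first by apply/funext => n; rewrite -ps1E /psC /ps1; case: eqP.
apply/funext => n; rewrite -psmulE (@psmul_coefM _ _ a%:P b%:P n) -?polyCM ?coefC //;
  by move=> i _; rewrite coefC.
Qed.

HB.instance Definition _ := GRing.isZmodMorphism.Build R (ps R) psC psC_is_zmod_morphism.
HB.instance Definition _ := GRing.isMonoidMorphism.Build R (ps R) psC psC_is_monoid_morphism.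

Lemma coef_psCM c f n : (psC c * f) n = c * f n.
Proof.
rewrite -psmulE /psmul big_ord_recl big1 ?addr0 ?subn0 // => i _.
by rewrite /psC /= mul0r.
Qed.

Lemma psunit_psC c : (psC c \is a GRing.unit) = (c \is a GRing.unit).
Proof. by []. Qed.

Definition psX : ps R := fun n => (n == 1)%:R.

Lemma coef_psXM f n : (psX * f) n = if n is n'.+1 then f n' else 0.
Proof.
rewrite -psmulE (@psmul_coefM _ _ 'X (trunc n f) n) ?coefXM.
- by case: n => //= n; rewrite coef_trunc.
- by move=> i _; rewrite coefX.
- exact: coef_trunc.
Qed.

Lemma coef_psXnM k f n : (psX ^+ k * f) n = if (k <= n)%N then f (n - k)%N else 0.
Proof.
elim: k => [|k IHk] in n *; first by rewrite mul1r subn0.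
by rewrite exprS -mulrA coef_psXM; case: n => // n; rewrite IHk.
Qed.

Lemma coef_psCXn c k n : (psC c * psX ^+ k) n = if n == k then c else 0.
Proof.
rewrite mulrC coef_psXnM /psC subn_eq0.
by rewrite eqn_leq andbC; case: (k <= n)%N.
Qed.

Definition psmap (d : R -> R) (f : ps R) : ps R := fun n => d (f n).

Fact psmap_is_zmod_morphism (d : {additive R -> R}) : zmod_morphism (psmap d).
Proof. by move=> f g; apply/funext => n; rewrite /psmap coef_psD raddfB. Qed.

HB.instance Definition _ (d : {additive R -> R}) :=
  GRing.isZmodMorphism.Build (ps R) (ps R) (psmap d) (psmap_is_zmod_morphism d).

Section PsmapDerivation.
Variable d : {additive R -> R}.
Hypothesis dM : forall x y, d (x * y) = d x * y + x * d y.

Lemma psmapM f g : psmap d (f * g) = psmap d f * g + f * psmap d g.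
Proof.
apply/funext => n; rewrite coef_psD -!psmulE /psmul /psmap raddf_sum -big_split.
by apply: eq_bigr => i _; rewrite dM.
Qed.

Lemma psmap_psC c : psmap d (psC c) = psC (d c).
Proof. by apply/funext => n; rewrite /psmap /psC; case: eqP; rewrite ?raddf0. Qed.

Lemma psmap_psX : psmap d psX = 0.
Proof. by apply/funext => n; rewrite /psmap /psX (derivation_nat dM). Qed.

End PsmapDerivation.

Lemma psexpzE f (z : int) : f \is a GRing.unit -> psexpz f z = f ^ z.
Proof.
have iterE n : iter n (psmul f) (ps1 R) = f ^+ n.
  by elim: n => [|n IHn] //=; rewrite IHn exprS.
by move=> Uf; case: z => n; rewrite /psexpz iterE // psinvE ?unitrX.
Qed.

Lemma psprodE (s : seq (ps R)) : psprod s = \prod_(f <- s) f.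
Proof. by elim: s => [|f s IHs]; rewrite ?big_nil ?big_cons //= -IHs. Qed.

End PowerSeriesRing.

Arguments psX {R}.
Arguments psC {R}.

Section NewtonDerivative.
Variables (S : comUnitRingType) (D : {additive S -> S}).
Hypothesis DM : forall x y, D (x * y) = D x * y + x * D y.
Hypothesis nat_unit : forall n, (0 < n)%N -> (n%:R : S) \is a GRing.unit.
(* E is determined by the power sums P through Newton's identities, as H(1^j)
   is by the H(i); t plays the role of T. *)
Variables (m : nat) (t : S) (P E : nat -> S).
Hypothesis E0 : E 0%N = 1.
Hypothesis newton : forall j,
  j%:R * E j = \sum_(1 <= i < j.+1) (-1) ^+ i.-1 * P i * E (j - i)%N.
Hypothesis DP : forall i, (0 < i)%N ->
  D (P i) = if (i < m)%N then (-1) ^+ i * 'C(m.-1, i.-1)%:R * t ^+ (m - i) else 0.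

Local Notation dE j := (- \sum_(1 <= l < m | (l <= j)%N)
  'C(m, l)%:R / m%:R * t ^+ (m - l) * E (j - l)%N).

Lemma newton_sum_DP j :
  \sum_(1 <= i < j.+1) (-1) ^+ i.-1 * D (P i) * E (j - i)%N =
  - \sum_(1 <= l < m | (l <= j)%N) 'C(m.-1, l.-1)%:R * t ^+ (m - l) * E (j - l)%N.
Proof.
rewrite -sumrN (@big_nat_widen _ _ _ 1 j.+1 (j.+1 + m)) ?leq_addr //.
rewrite (@big_nat_widen _ _ _ 1 m (j.+1 + m)) ?leq_addl // big_mkcond [RHS]big_mkcond.
apply: eq_big_nat => -[//|i] _ /=; rewrite ltnS (DP (ltn0Sn i)).
case: (i < j)%N; case: (i.+1 < m)%N; rewrite ?mulr0 ?mul0r ?oppr0 //.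
by rewrite exprS !mulrA mulrN1 !mulNr -expr2 sqrr_sign mul1r.
Qed.

Lemma newton_sum_DE j :
  \sum_(1 <= i < j.+1) (-1) ^+ i.-1 * P i * dE (j - i)%N =
  - \sum_(1 <= l < m | (l <= j)%N)
      (j - l)%:R * ('C(m, l)%:R / m%:R * t ^+ (m - l) * E (j - l)%N).
Proof.
under eq_bigr => i _ do rewrite mulrN mulr_sumr.
rewrite sumrN (exchange_big_dep_nat xpredT) //=; congr (- _); rewrite [RHS]big_mkcond.
apply: eq_big_nat => l /andP[l_gt0 _].
have -> : \sum_(1 <= i < j.+1 | (l <= j - i)%N)
    (-1) ^+ i.-1 * P i * ('C(m, l)%:R / m%:R * t ^+ (m - l) * E (j - i - l)%N) =
  \sum_(1 <= i < (j - l).+1)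
    'C(m, l)%:R / m%:R * t ^+ (m - l) * ((-1) ^+ i.-1 * P i * E (j - l - i)%N).
  rewrite (@big_nat_widen _ _ _ 1 (j - l).+1 j.+1) ?ltnS ?leq_subr //.
  rewrite [LHS]big_nat_cond [RHS]big_nat_cond; apply: eq_big => i.
    by apply/idP/idP; lia.
  by move=> _; rewrite mulrCA subnAC.
rewrite -mulr_sumr -newton mulrCA; case: leqP => // /ltnW.
by rewrite -subn_eq0 => /eqP ->; rewrite mul0r.
Qed.

Lemma derivation_newton j : D (E j) = dE j.
Proof.
have binE l : (0 < l < m)%N -> 'C(m.-1, l.-1)%:R = l%:R * ('C(m, l)%:R / m%:R) :> S.
  case/andP=> l_gt0 lt_lm; have := mul_bin_diag m l.-1; rewrite prednK // => binP.
  by rewrite mulrA -natrM -binP natrM mulrAC divrr ?mul1r // nat_unit //; lia.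
elim/ltn_ind: j => -[_|j IHj].
  rewrite E0 (derivation1 DM) big_nat_cond big1 ?oppr0 //.
  by move=> l /andP[/andP[l_gt0 _]]; rewrite leqn0 => /eqP l0; rewrite l0 in l_gt0.
apply: (mulrI (nat_unit (ltn0Sn j))).
rewrite -(derivationMl DM) ?(derivation_nat DM) // newton raddf_sum.
have -> : \sum_(1 <= i < j.+2) D ((-1) ^+ i.-1 * P i * E (j.+1 - i)%N) =
    \sum_(1 <= i < j.+2) (-1) ^+ i.-1 * D (P i) * E (j.+1 - i)%N +
    \sum_(1 <= i < j.+2) (-1) ^+ i.-1 * P i * dE (j.+1 - i)%N.
  rewrite -big_split; apply: eq_big_nat => i /andP[i_gt0 _] /=.
  by rewrite DM raddfMsign -IHj ?mulrA //; lia.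
rewrite newton_sum_DP newton_sum_DE -opprD -big_split mulrN mulr_sumr; congr (- _).
rewrite [LHS]big_nat_cond [RHS]big_nat_cond.
apply: eq_bigr => l /andP[/andP[l_gt0 lt_lm] le_lj] /=.
by rewrite binE ?l_gt0 // natrB //; ring.
Qed.

End NewtonDerivative.

Lemma sum_nat_shift (V : nmodType) (F : nat -> V) l M :
  \sum_(0 <= j < M | (l <= j)%N) F (j - l)%N = \sum_(0 <= j < M - l) F j.
Proof.
rewrite -(big_nat_widenl l 0 M xpredT (fun j => F (j - l)%N)) //.
by rewrite -{1}[l]add0n big_addn; apply: eq_bigr => j _; rewrite addnK.
Qed.

Section GeneratingSeries.
Variable R : comUnitRingType.

Definition ogf (a : R) (E : nat -> ps R) : ps R :=
  fun s => \sum_(j < s.+1) a ^+ j * E j (s - j)%N.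

Lemma ogfE a E M s : (s < M)%N ->
  ogf a E s = (\sum_(0 <= j < M) (psC a * psX) ^+ j * E j) s.
Proof.
move=> lt_sM; rewrite /ogf -(big_mkord xpredT (fun j => a ^+ j * E j (s - j)%N)).
rewrite coef_ps_sum (big_nat_widen _ _ _ _ _ lt_sM) big_mkcond /=.
apply: eq_bigr => j _; rewrite exprMn -rmorphXn -mulrA coef_psCM coef_psXnM ltnS.
by case: leqP; rewrite ?mulr0.
Qed.

Lemma ogf_unit a E : (ogf a E \is a GRing.unit) = (E 0%N 0%N \is a GRing.unit).
Proof. by rewrite psunitE /ogf big_ord1 expr0 mul1r. Qed.

Variables (d : {additive R -> R}) (m : nat) (E : nat -> ps R) (a : R).
Hypothesis dM : forall x y, d (x * y) = d x * y + x * d y.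
Hypothesis da : d a = 0.
Hypothesis dE : forall j, psmap d (E j) =
  - \sum_(1 <= l < m | (l <= j)%N) 'C(m, l)%:R / m%:R * psX ^+ (m - l) * E (j - l)%N.

Local Notation u := (psC a * psX).

Lemma psmap_ogf_partial M :
  psmap d (\sum_(0 <= j < M) u ^+ j * E j) =
  - \sum_(1 <= l < m) 'C(m, l)%:R / m%:R * psC a ^+ l * psX ^+ m *
      \sum_(0 <= j < M - l) u ^+ j * E j.
Proof.
have du : psmap d u = 0.
  by rewrite (psmapM dM) psmap_psC da rmorph0 mul0r add0r (psmap_psX dM) mulr0.
rewrite raddf_sum /=.
under eq_bigr => j _ do
  rewrite (psmapM dM) (derivationX_eq0 (psmapM dM) _ du) mul0r add0r dE mulrN mulr_sumr.
rewrite sumrN (exchange_big_dep_nat xpredT) //=; congr (- _).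
apply: eq_big_nat => l /andP[_ lt_lm].
rewrite -sum_nat_shift mulr_sumr big_mkcond [RHS]big_mkcond.
apply: eq_bigr => j _; case: leqP => // le_lj.
have -> : u ^+ j = u ^+ (j - l) * u ^+ l by rewrite -exprD subnK.
have -> : psX ^+ m = psX ^+ l * psX ^+ (m - l) :> ps R by rewrite -exprD subnKC // ltnW.
(* ring would otherwise try to push the morphism psC inside *)
rewrite !exprMn; set pa := psC a; ring.
Qed.

Lemma psmap_ogf : psmap d (ogf a E) =
  - (\sum_(1 <= l < m) 'C(m, l)%:R / m%:R * psC a ^+ l) * psX ^+ m * ogf a E.
Proof.
(* Partial sums with M - l > s terms for all l < m are exact up to order s. *)
apply/funext => s; pose M := (s.+1 + m)%N.
have -> : psmap d (ogf a E) s = psmap d (\sum_(0 <= j < M) u ^+ j * E j) s.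
  by rewrite /psmap (ogfE _ _ (ltn_addr m (ltnSn s))).
rewrite psmap_ogf_partial !mulNr !coef_psN !mulr_suml !coef_ps_sum; congr (- _).
apply: eq_big_nat => l /andP[_ lt_lm]; apply: coef_psM_eq => i le_is.
by rewrite (ogfE _ _ (_ : i < M - l)%N) //; lia.
Qed.

End GeneratingSeries.

Lemma pdzB K j (p q : MP K) : pdz j (p - q) = pdz j p - pdz j q.
Proof.
elim: K p q => [|K' IH] p q /=; first by rewrite subr0.
case: (j == K'); first exact: derivB.
have pdz0 : @pdz K' j 0 = 0 by rewrite -(subrr 0) IH !subrr.
by apply/polyP => i; rewrite coefB !coef_map_id0 // coefB IH.
Qed.

HB.instance Definition _ K j :=
  GRing.isZmodMorphism.Build (MP K) (MP K) (@pdz K j) (@pdzB K j).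

Lemma pdzM K j (p q : MP K) : pdz j (p * q) = pdz j p * q + p * pdz j q.
Proof.
elim: K p q => [|K IH] p q /=; first by rewrite mul0r mulr0 addr0.
case: (j == K); first exact: derivM.
apply/polyP => i; rewrite coefD !coef_map_id0 ?raddf0 // !coefM raddf_sum -big_split /=.
by apply: eq_bigr => l _; rewrite IH !coef_map_id0 ?raddf0.
Qed.

Lemma pdz_zvar K j j' : (j < K)%N -> pdz j (zvar K j') = (j' == j)%:R.
Proof.
elim: K => [|K IH] //= lt_jK; have [->|ne_jK] := eqVneq j K.
  by case: eqVneq; rewrite ?derivX ?derivC.
have lt_jK' : (j < K)%N by rewrite ltn_neqAle ne_jK -ltnS.
have pdz1 : @pdz K j 1 = 0 by exact: (derivation1 (@pdzM K j)).
have [->|_] := eqVneq j' K; apply/polyP => i; rewrite coef_map_id0 ?raddf0 //.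
  by rewrite eq_sym (negbTE ne_jK) coefX coef0; case: (i == 1)%N; rewrite ?raddf0.
by rewrite -polyC_natr !coefC; case: (i == 0)%N; rewrite ?raddf0 ?IH.
Qed.

Lemma pdz_zeta K m k : odd m -> (3 <= m)%N -> ((m - 3)./2 < K)%N ->
  pdz ((m - 3)./2) (zeta K k) = (k == m)%:R.
Proof.
move=> odd_m ge3_m lt_mK; rewrite /zeta; case: ifP => [/andP[odd_k ge3_k]|].
  rewrite pdz_zvar //; congr (_%:R).
  have m_mod2 : (m %% 2 = 1)%N by rewrite modn2 odd_m.
  have k_mod2 : (k %% 2 = 1)%N by rewrite modn2 odd_k.
  by rewrite -!divn2; apply/eqP/eqP; lia.
by rewrite raddf0; case: eqP => // ->; rewrite odd_m ge3_m.
Qed.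

Lemma MP_nat_unit K n : (0 < n)%N -> (n%:R : MP K) \is a GRing.unit.
Proof.
move=> n_gt0; elim: K => [|K IH] /=; first by rewrite unitfE pnatr_eq0 -lt0n.
by rewrite -polyC_natr (rmorph_unit polyC IH).
Qed.

Lemma sum_bin_inner (R : comPzRingType) (a : R) m : (0 < m)%N ->
  \sum_(1 <= l < m) 'C(m, l)%:R * a ^+ l = (a + 1) ^+ m - 1 - a ^+ m.
Proof.
case: m => // m _; rewrite exprD1n big_ord_recr big_ord_recl /= binn bin0 expr0 !mulr1n.
rewrite big_add1 big_mkord /=; under [in RHS]eq_bigr do rewrite -mulr_natl /bump add1n.
by ring.
Qed.

Section ZetaLogarithmicDerivative.
Variables K m : nat.
Hypotheses (odd_m : odd m) (ge3_m : (3 <= m)%N) (lt_mK : ((m - 3)./2 < K)%N).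

Local Notation D := (psmap (@pdz K ((m - 3)./2))).

Lemma psmap_pdzM (f g : ps (MP K)) : D (f * g) = D f * g + f * D g.
Proof. exact: (@psmapM (MP K) (@pdz K ((m - 3)./2)) (@pdzM K _)). Qed.

Lemma ps_nat_unit n : (0 < n)%N -> (n%:R : ps (MP K)) \is a GRing.unit.
Proof. by move=> n_gt0; rewrite -(rmorph_nat psC) psunit_psC MP_nat_unit. Qed.

Lemma psmap_Hs i : (0 < i)%N -> D (Hs K i) =
  if (i < m)%N then (-1) ^+ i * 'C(m.-1, i.-1)%:R * psX ^+ (m - i) else 0.
Proof.
move=> i_gt0; apply/funext => t; rewrite /psmap /Hs.
have dHs : pdz (m - 3)./2 ((-1) ^+ i * 'C(i + t - 1, i - 1)%:R * zeta K (i + t)) =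
    (-1) ^+ i * 'C(i + t - 1, i - 1)%:R * (i + t == m)%:R.
  rewrite -mulrA raddfMsign (derivationMl (@pdzM K _)) ?(derivation_nat (@pdzM K _)) //.
  by rewrite /= pdz_zeta // mulrA.
have [->|t_neq0] := eqVneq t 0%N.
  rewrite raddf0; case: ifP => // lt_im.
  by rewrite -(rmorph_nat psC) -(rmorph_sign psC) -rmorphM coef_psCXn ifF //; lia.
rewrite dHs; case: ifP => [lt_im|ge_im]; last by case: eqP => [?|_]; [lia | rewrite mulr0].
rewrite -(rmorph_nat psC) -(rmorph_sign psC) -rmorphM coef_psCXn.
have [e|ne] := eqVneq (i + t)%N m; last by rewrite mulr0 ifF //; lia.
by rewrite mulr1 -e !subn1 addKn eqxx.
Qed.

Lemma size_H1list n : size (H1list K n) = n.+1.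
Proof. by elim: n => [|n IHn] //=; rewrite size_rcons IHn. Qed.

Lemma nth_H1list n i : (i <= n)%N -> nth (ps1 _) (H1list K n) i = H1 K i.
Proof.
elim: n => [|n IHn] in i *; first by case: i.
rewrite leq_eqVlt => /predU1P[->|lt_in]; last first.
  by rewrite /= nth_rcons size_H1list lt_in IHn.
by rewrite /H1 /= !nth_rcons !size_H1list ltnn eqxx.
Qed.

Lemma H1_newton j :
  j%:R * H1 K j = \sum_(1 <= i < j.+1) (-1) ^+ i.-1 * Hs K i * H1 K (j - i)%N.
Proof.
case: j => [|j]; first by rewrite mul0r big_geq.
apply/funext => t; rewrite coef_ps_sum -(rmorph_nat psC) coef_psCM.
rewrite {1}/H1 /= nth_rcons size_H1list ltnn eqxx /= mulVKr ?MP_nat_unit //.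
apply: eq_big_nat => i /andP[i_gt0 le_ij].
by rewrite nth_H1list ?subn1 -?(rmorph_sign psC) -?mulrA ?coef_psCM //; lia.
Qed.

Lemma psmap_H1 j : D (H1 K j) = - \sum_(1 <= l < m | (l <= j)%N)
  'C(m, l)%:R / m%:R * psX ^+ (m - l) * H1 K (j - l)%N.
Proof. exact: (derivation_newton psmap_pdzM ps_nat_unit _ H1_newton psmap_Hs). Qed.

Lemma cserE n : cser K n = n%:R * ogf (n.-1)%:R (H1 K).
Proof. by apply/funext => t; rewrite -(rmorph_nat psC) coef_psCM. Qed.

Lemma cser_unit n : (0 < n)%N -> cser K n \is a GRing.unit.
Proof. by move=> n_gt0; rewrite cserE unitrM ps_nat_unit // ogf_unit unitr1. Qed.

Lemma logder_cser n : (0 < n)%N -> logder D (cser K n) =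
  - (m%:R)^-1 * (n%:R ^+ m - 1 - (n.-1)%:R ^+ m) * psX ^+ m.
Proof.
move=> n_gt0; have Uogf : ogf (n.-1)%:R (H1 K) \is a GRing.unit.
  by rewrite ogf_unit unitr1.
rewrite cserE (logderM psmap_pdzM) ?ps_nat_unit // {1}/logder.
rewrite (derivation_nat psmap_pdzM) mul0r add0r.
have := psmap_ogf (@pdzM K _) (derivation_nat (@pdzM K _) _) psmap_H1.
rewrite /logder /= => ->; rewrite mulrK // rmorph_nat.
have -> : (n%:R : ps (MP K)) = (n.-1)%:R + 1 by rewrite natr1 prednK.
rewrite -sum_bin_inner ?(ltnW (ltnW ge3_m)) //; congr (_ * _).
rewrite mulNr mulr_sumr; congr (- _); apply: eq_bigr => l _.
by rewrite mulrAC mulrC.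
Qed.

Lemma cprodE b : cprod K b = \prod_(0 <= j < b) cser K j.+1.
Proof. by rewrite /cprod psprodE big_map /index_iota subn0. Qed.

Lemma logder_cprod b :
  logder D (cprod K b) = - (m%:R)^-1 * (b%:R ^+ m - b%:R) * psX ^+ m.
Proof.
rewrite cprodE (logder_prod psmap_pdzM) => [|j _]; last exact: cser_unit.
under eq_bigr do rewrite logder_cser // addrAC.
rewrite -mulr_suml -mulr_sumr sumrB telescope_sumr // sumr_const_nat subn0.
by rewrite expr0n gtn_eqF ?subr0 // (ltnW (ltnW ge3_m)).
Qed.

Lemma cprod_unit b : cprod K b \is a GRing.unit.
Proof. by rewrite cprodE unitr_prod // => j _; exact: cser_unit. Qed.

Lemma alphaE k (b : 'I_k -> nat) (n : 'I_k -> int) :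
  alpha K b n = \prod_(i < k) cprod K (b i) ^ n i.
Proof.
rewrite /alpha psprodE big_map big_enum /=.
by apply: eq_bigr => i _; rewrite psexpzE // cprod_unit.
Qed.

Lemma alpha_unit k (b : 'I_k -> nat) (n : 'I_k -> int) : alpha K b n \is a GRing.unit.
Proof. by rewrite alphaE unitr_prod // => i _; rewrite unitrXz // cprod_unit. Qed.

Lemma logder_alpha k (b : 'I_k -> nat) (n : 'I_k -> int) :
    \sum_(i < k) n i * (b i)%:Z = 0 ->
  logder D (alpha K b n) =
    - (m%:R)^-1 * (\sum_(i < k) n i * (b i)%:Z ^+ m)%:~R * psX ^+ m.
Proof.
move=> hsum; rewrite alphaE (logder_prod psmap_pdzM) => [|i _]; last first.
  by rewrite unitrXz // cprod_unit.
under eq_bigr do rewrite (logderXz psmap_pdzM) ?cprod_unit // logder_cprod.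
transitivity (- (m%:R)^-1 *
    (\sum_(i < k) (n i)%:~R * ((b i)%:R ^+ m - (b i)%:R)) * psX ^+ m : ps (MP K)).
  by rewrite mulr_sumr mulr_suml; apply: eq_bigr => i _; ring.
congr (_ * _ * _).
have sum_nb : \sum_(i < k) (n i)%:~R * (b i)%:R = 0 :> ps (MP K).
  rewrite -[RHS](rmorph0 (intr : int -> ps (MP K))) -hsum rmorph_sum.
  by apply: eq_bigr => i _; rewrite rmorphM.
under eq_bigr do rewrite mulrBr.
by rewrite sumrB sum_nb subr0 rmorph_sum; apply: eq_bigr => i _; rewrite rmorphM rmorphXn.
Qed.

End ZetaLogarithmicDerivative.

Theorem mainTheorem12 (k : nat) (b : 'I_k -> nat) (n : 'I_k -> int)
    (hb : forall i, (0 < b i)%N)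
    (hsum : \sum_(i < k) n i * (b i)%:Z = 0)
    (m : nat) (hm_odd : odd m) (hm3 : (3 <= m)%N)
    (K : nat) (hK : ((m - 3)./2 < K)%N) (N : nat) :
  psmul (delta m (alpha K b n)) (psinv (alpha K b n)) N
  = (if N == m then - (m%:R)^-1 * (\sum_(i < k) n i * (b i)%:Z ^+ m)%:~R
     else 0).
Proof.
have -> : psmul (delta m (alpha K b n)) (psinv (alpha K b n)) =
    logder (psmap (@pdz K ((m - 3)./2))) (alpha K b n).
  by rewrite psmulE psinvE ?alpha_unit.
rewrite logder_alpha // -(rmorph_nat psC) -rmorphV ?MP_nat_unit ?(ltnW (ltnW hm3)) //.
by rewrite -(rmorph_int psC) -rmorphN -rmorphM coef_psCXn.
Qed.
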